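(* Let $K\subseteq\mathbb{R}^d$ be a convex body, $\varepsilon>0$, $i\in I^\pm$, and let $\mathrm{Cap}_\varepsilon(p)(K_i^* )$ be any useful $\varepsilon$-cap induced by an augmented point $p\in\overline{\partial}K_i^*$. Then $\mathrm{Cap}_\varepsilon(p)(K_i^* )^\downarrow$ lies within a ball of radius $O(1)$ centered at the origin, where the constant depends only on $d$.
   Context: For a unit vector $u$, $H^+(u)$ is the closed supporting halfspace of $K$ with outer normal $u$. Let $e_1,\dots,e_d$ be the coordinate unit vectors, $e_{-j}=-e_j$, $I^\pm=\{\pm1,\dots,\pm d\}$, $V_i=\{u\in\mathbb{S}^{d-1}:\langle u,e_i\rangle\ge\langle u,e_j\rangle\ \forall j\in I^\pm,j\ne i\}$, $S_i=\bigcap_{u\in V_i}H^+(u)$. Fix $i$ and use orthonormal coordinates $(x_1,\dots,x_{d-1},y)$ in which $e_i$ is the upward $y$-direction and the $x$-coordinates are the remaining original coordinates (up to sign); $S^\downarrow$ is orthogonal projection onto $\{y=0\}\cong\mathbb{R}^{d-1}$, and $S\pm\varepsilon$ vertical translation. $K^\downarrow\oplus\alpha$ is the set of points of $\{y=0\}$ within distance $\alpha$ of $K^\downarrow$; $K_i^{(\alpha)}=\{x\in S_i:x^\downarrow\in K^\downarrow\oplus\alpha\}$, $K_i=K_i^{(2\varepsilon)}$. For a closed convex set $U$ in which every upward vertical ray from a boundary point lies in $U$ (U-shaped), $\overline{\partial}U$ is the set of boundary points with a non-vertical supporting hyperplane, each point augmented by a choice $h(q)$ of such a hyperplane. The projective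 dual of a point $p$ is the hyperplane $p^*:y=\sum_{j=1}^{d-1}p_jx_j-p_d$ (with $p^{**}=p$ for non-vertical hyperplanes); $K_i^*$ is the intersection of the closed upper halfspaces of $q^*$ for $q\in\overline{\partial}K_i$. The augmented point $q\in\overline{\partial}K_i$ with hyperplane $h(q)$ corresponds to $h(q)^*\in\overline{\partial}K_i^*$ with supporting hyperplane $q^*$. The $\varepsilon$-cap $\mathrm{Cap}_\varepsilon(p)(K_i^* )$ is the set of augmented points of $\overline{\partial}K_i^*$ in the closed lower halfspace of $h(p)+\varepsilon$. It is useful if $p$ corresponds to a point $q\in\overline{\partial}K_i$ lying on the lower boundary of $K_i^{(\varepsilon)}$. *)

From HB Require Import structures.
From mathcomp Require Import all_boot all_order all_algebra.
From mathcomp Require Import reals.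
Set Implicit Arguments. Unset Strict Implicit. Unset Printing Implicit Defensive.
Import Order.TTheory GRing.Theory Num.Theory.
Local Open Scope ring_scope.

Section Defs.
Variable R : realType.

Definition dot (m : nat) (u v : 'I_m -> R) : R := \sum_(j < m) u j * v j.
Definition sqdist (m : nat) (u v : 'I_m -> R) : R := dot (fun j => u j - v j) (fun j => u j - v j).
Definition enorm (m : nat) (u : 'I_m -> R) : R := Num.sqrt (dot u u).

Definition is_convex (m : nat) (K : ('I_m -> R) -> Prop) :=
  forall x y (t : R), K x -> K y -> 0 <= t -> t <= 1 ->
    K (fun j => (1 - t) * x j + t * y j).
Definition is_closed (m : nat) (K : ('I_m -> R) -> Prop) :=
  forall x, (forall e : R, 0 < e -> exists y, K y /\ sqdist x y < e) -> K x.
Definition is_bounded (m : nat) (K : ('I_m -> R) -> Prop) :=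
  exists M : R, forall x, K x -> dot x x <= M.
Definition has_interior (m : nat) (K : ('I_m -> R) -> Prop) :=
  exists (c : 'I_m -> R) (r : R), 0 < r /\ forall x, sqdist x c < r -> K x.
Definition convex_body (m : nat) (K : ('I_m -> R) -> Prop) :=
  [/\ is_convex K, is_closed K, is_bounded K & has_interior K].

(* (k, true) stands for +k (e_k), (k, false) for -k (e_{-k} = -e_k). *)
Definition sgnb (s : bool) : R := if s then 1 else -1.
Definition evec (m : nat) (i : 'I_m * bool) : 'I_m -> R :=
  fun j => if j == i.1 then sgnb i.2 else 0.

Definition Vdir (m : nat) (i : 'I_m * bool) (u : 'I_m -> R) : Prop :=
  dot u u = 1 /\ forall j : 'I_m * bool, j <> i -> dot u (evec j) <= dot u (evec i).

(* closed supporting halfspace of K with outer normal u: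
   { z | <u,z> <= sup_{x in K} <u,x> } *)
Definition Hplus (m : nat) (K : ('I_m -> R) -> Prop) (u : 'I_m -> R) (z : 'I_m -> R) : Prop :=
  forall t : R, (forall x, K x -> dot u x <= t) -> dot u z <= t.

Definition Sset (m : nat) (K : ('I_m -> R) -> Prop) (i : 'I_m * bool) (z : 'I_m -> R) : Prop :=
  forall u, Vdir i u -> Hplus K u z.

(* points / non-vertical hyperplane parameters in R^n x R *)
Definition pt (n : nat) := (('I_n -> R) * R)%type.

(* x-coordinates: remaining original coordinates; vertical coordinate
   y = - <z, e_i>. *)
Definition down (n : nat) (k : 'I_n.+1) (z : 'I_n.+1 -> R) : 'I_n -> R :=
  fun j => z (lift k j).
Definition to_orig (n : nat) (i : 'I_n.+1 * bool) (q : pt n) : 'I_n.+1 -> R :=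
  fun m => match unlift i.1 m with Some j => q.1 j | None => - sgnb i.2 * q.2 end.

(* K^down (+) alpha : points of {y=0} within distance alpha of K^down *)
Definition Kdown_thick (n : nat) (K : ('I_n.+1 -> R) -> Prop) (k : 'I_n.+1)
    (alpha : R) (w : 'I_n -> R) : Prop :=
  forall delta : R, 0 < delta ->
    exists z, K z /\ sqdist w (down k z) < (alpha + delta) ^+ 2.

Definition Ki_alpha (n : nat) (K : ('I_n.+1 -> R) -> Prop) (i : 'I_n.+1 * bool)
    (alpha : R) (q : pt n) : Prop :=
  Sset K i (to_orig i q) /\ Kdown_thick K i.1 alpha q.1.

(* hyperplane with parameters h = (a, b) :  y = <a, x> - b  (= the dual p^* of p = h) *)
Definition on_hp (n : nat) (h : pt n) (z : pt n) : Prop := z.2 = dot h.1 z.1 - h.2.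
Definition above_hp (n : nat) (h : pt n) (z : pt n) : Prop := dot h.1 z.1 - h.2 <= z.2.
Definition below_hp (n : nat) (h : pt n) (z : pt n) : Prop := z.2 <= dot h.1 z.1 - h.2.
Definition hp_shift (n : nat) (h : pt n) (eps : R) : pt n := (h.1, h.2 - eps).

(* augmented boundary: pairs (point q, non-vertical supporting hyperplane h(q)) *)
Definition aug_bd (n : nat) (U : pt n -> Prop) (q : pt n * pt n) : Prop :=
  [/\ U q.1, on_hp q.2 q.1 & forall z, U z -> above_hp q.2 z].

Definition dual_set (n : nat) (U : pt n -> Prop) (z : pt n) : Prop :=
  forall q, aug_bd U q -> above_hp q.1 z.

(* correspondence: q with h(q) |-> h(q)^* with supporting hyperplane q^* *)
Definition corr (n : nat) (q : pt n * pt n) : pt n * pt n := (q.2, q.1).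

Definition lower_bd (n : nat) (U : pt n -> Prop) (z : pt n) : Prop :=
  U z /\ forall y', y' < z.2 -> ~ U (z.1, y').

Definition Kset (n : nat) (K : ('I_n.+1 -> R) -> Prop) (i : 'I_n.+1 * bool) (eps : R) :=
  Ki_alpha K i (2 * eps).

Definition Kstar (n : nat) (K : ('I_n.+1 -> R) -> Prop) (i : 'I_n.+1 * bool) (eps : R) :=
  dual_set (Kset K i eps).

Definition Cap (n : nat) (K : ('I_n.+1 -> R) -> Prop) (i : 'I_n.+1 * bool) (eps : R)
    (p r : pt n * pt n) : Prop :=
  aug_bd (Kstar K i eps) r /\ below_hp (hp_shift p.2 eps) r.1.

Definition useful (n : nat) (K : ('I_n.+1 -> R) -> Prop) (i : 'I_n.+1 * bool) (eps : R)
    (p : pt n * pt n) : Prop :=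
  aug_bd (Kstar K i eps) p /\
  exists q, [/\ aug_bd (Kset K i eps) q, p = corr q & lower_bd (Ki_alpha K i eps) q.1].

End Defs.

From Pilot Require Import Defs.
From HB Require Import structures.
From mathcomp Require Import all_boot all_order all_algebra.
From mathcomp Require Import boolp classical_sets reals topology normedtype derive.
From mathcomp Require Import ring lra.
Import Order.TTheory GRing.Theory Num.Theory.
Import numFieldNormedType.Exports.
Local Open Scope classical_set_scope.
Local Open Scope ring_scope.
Set Implicit Arguments. Unset Strict Implicit. Unset Printing Implicit Defensive.

(* In the coordinates (x, y), S_i is the epigraph of
   f(x) = max_v (<v, x> - h_K(v, s)), the maximum running over the slopes v in
   the unit cube [-1, 1]^(d-1), where h_K is the support function of K: the
   outer normals in V_i are exactly the positive multiples of the vectors (v, s),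
   s = +-1 being the sign of i.
   By compactness the maximum is attained, so above every x there is an
   augmented boundary point of S_i whose supporting hyperplane has a slope in
   the cube.
   Let the useful cap come from q = (x0, y0) with x0 in K^down (+) eps, and let
   r = (a, b) be in the cap. Moving x0 by +-eps along the j-th axis, with the
   sign of a_j, stays inside K^down (+) 2 eps, so the graph point above it, with
   a maximizing slope v, is an augmented boundary point of K_i. Then r, a point
   of K_i^*, lies above the dual of that point and below q^* + eps; with the
   supporting inequality of slope v at q this gives
   eps |a_j| <= eps + eps |v_j| <= 2 eps. So every coordinate of r^down is at
   most 2 in absolute value, and |r^down| <= 2 sqrt(d - 1). *)

Section DotProduct.
Variable R : realType.

Lemma dotC m (u z : 'I_m -> R) : dot u z = dot z u.
Proof. by apply: eq_bigr => j _; rewrite mulrC. Qed.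

Lemma dotZl m (c : R) (u z : 'I_m -> R) : dot (fun j => c * u j) z = c * dot u z.
Proof. by rewrite /dot mulr_sumr; apply: eq_bigr => j _; rewrite mulrA. Qed.

Lemma dot_self_ge0 m (w : 'I_m -> R) : 0 <= dot w w.
Proof. by apply: sumr_ge0 => j _; rewrite -expr2 sqr_ge0. Qed.

Lemma sqr_le_dot_self m (w : 'I_m -> R) j : w j ^+ 2 <= dot w w.
Proof.
rewrite /dot (bigD1 j) //= -expr2 lerDl; apply: sumr_ge0 => l _.
by rewrite -expr2 sqr_ge0.
Qed.

Lemma dot_le_sqr_sum m (u z : 'I_m -> R) : 2 * dot u z <= dot u u + dot z z.
Proof.
rewrite /dot mulr_sumr -big_split /=; apply: ler_sum => j _.
have := sqr_ge0 (u j - z j); rewrite sqrrB; lra.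
Qed.

Lemma dot_evec m (u : 'I_m -> R) (j : 'I_m * bool) :
  dot u (evec R j) = u j.1 * sgnb R j.2.
Proof.
rewrite /dot (bigD1 j.1) //= /evec eqxx big1 ?addr0 // => l /negbTE hl.
by rewrite hl mulr0.
Qed.

Lemma dot_down n (k : 'I_n.+1) (u z : 'I_n.+1 -> R) :
  dot u z = u k * z k + dot (Defs.down k u) (Defs.down k z).
Proof. by rewrite /dot (bigD1_ord k). Qed.

Definition shift_coord m (x : 'I_m -> R) (j : 'I_m) (c : R) : 'I_m -> R :=
  fun l => x l + (if l == j then c else 0).

Lemma dot_shift_coord m (x y : 'I_m -> R) j c :
  dot (shift_coord x j c) y = dot x y + c * y j.
Proof.
rewrite /dot /shift_coord.
rewrite -[X in _ = _ + X](_ : \sum_l (if l == j then c else 0) * y l = c * y j).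
  by rewrite -big_split /=; apply: eq_bigr => l _; rewrite mulrDl.
by rewrite (bigD1 j) //= eqxx big1 ?addr0 // => l /negbTE ->; rewrite mul0r.
Qed.

Lemma dot_sub_le m (u u' w : 'I_m -> R) (d : R) : 0 <= d ->
  (forall j, `|u j - u' j| <= d) -> dot u w - dot u' w <= d * (m%:R + dot w w).
Proof.
move=> d0 hd; rewrite /dot -sumrB.
have -> : m%:R = \sum_(j < m) (1 : R) by rewrite sumr_const card_ord.
rewrite -big_split mulr_sumr /=; apply: ler_sum => j _.
rewrite -mulrBl; apply: le_trans (ler_norm _) _; rewrite normrM.
apply: ler_pM => //.
by case: (lerP 0 (w j)) => h; [rewrite ger0_norm | rewrite ltr0_norm]; nra.
Qed.

Lemma enorm_le_coord m (u : 'I_m -> R) (c : R) :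
  (forall j, `|u j| <= c) -> enorm u <= Num.sqrt (m%:R * c ^+ 2).
Proof.
move=> hc; apply: ler_wsqrtr.
have -> : m%:R * c ^+ 2 = \sum_(j < m) c ^+ 2 by rewrite sumr_const card_ord mulr_natl.
apply: ler_sum => j _.
apply: le_trans (ler_norm _) _; rewrite normrM expr2.
by apply: ler_pM.
Qed.

Lemma sgnb_sq b : sgnb R b * sgnb R b = 1.
Proof. by case: b; rewrite /sgnb ?mulr1 ?mulrNN ?mulr1. Qed.

Lemma sgnbN b : sgnb R (~~ b) = - sgnb R b.
Proof. by case: b; rewrite /sgnb ?opprK. Qed.

End DotProduct.

Lemma lipschitz_continuous (R : realFieldType) (V W : normedModType R)
    (f : V -> W) (k : R) :
  (forall x y, `|f x - f y| <= k * `|x - y|) -> continuous f.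
Proof.
move=> hf x; apply/cvgrPdist_lt => e e0.
have k1_gt0 : 0 < `|k| + 1 by rewrite ltr_pwDr ?normr_ge0.
near=> y; apply: le_lt_trans (hf x y) _.
apply: le_lt_trans (ler_wpM2r (normr_ge0 _) (ler_norm k)) _.
have : `|x - y| < e / (`|k| + 1).
  by near: y; apply/nbhs_normP; exists (e / (`|k| + 1)) => //=; rewrite divr_gt0.
rewrite ltr_pdivlMr // => h; apply: le_lt_trans h.
have : 0 <= `|x - y| by [].
have : 0 <= `|k| by [].
nra.
Unshelve. all: by end_near.
Qed.

Lemma rV_entry_le_norm (R : realType) n (V : 'rV[R]_n) j : `|V ord0 j| <= `|V|.
Proof.
rewrite (_ : `|V| = mx_norm V) // mx_normrE.
exact: (le_bigmax _ (fun ij : 'I_1 * 'I_n => `|V ij.1 ij.2|) (ord0, j)).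
Qed.

Section SupportFunction.
Variables (R : realType) (m : nat) (K : ('I_m -> R) -> Prop) (M : R).
Hypothesis K_bounded : forall x, K x -> dot x x <= M.
Hypothesis K_nonempty : exists z, K z.

Definition support (u : 'I_m -> R) : R := sup [set dot u z | z in K].

Lemma support_ub u z : K z -> dot u z <= support u.
Proof.
move=> Kz; apply: ub_le_sup; last by exists z.
exists ((dot u u + M) / 2) => _ [x Kx <-].
have := dot_le_sqr_sum u x; have := K_bounded Kx; lra.
Qed.

Lemma support_le u t : (forall z, K z -> dot u z <= t) -> support u <= t.
Proof.
move=> hub; apply: ge_sup => [|_ [z Kz <-]]; last exact: hub.
by case: K_nonempty => z Kz; exists (dot u z), z.
Qed.

Lemma support_le_perturb u u' d : 0 <= d -> (forall j, `|u j - u' j| <= d) ->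
  support u <= support u' + d * (m%:R + M).
Proof.
move=> d0 hd; apply: support_le => z Kz.
have := dot_sub_le z d0 hd; have := support_ub u' Kz.
have : d * (m%:R + dot z z) <= d * (m%:R + M).
  by rewrite ler_wpM2l // lerD2l K_bounded.
lra.
Qed.

End SupportFunction.

Definition unit_cube (R : realType) n (v : 'I_n -> R) := forall j, `|v j| <= 1.

Section SlopeNormals.
Variables (R : realType) (n : nat) (i : 'I_n.+1 * bool).
Local Notation s := (sgnb R i.2).

Definition slope_normal (v : 'I_n -> R) : 'I_n.+1 -> R :=
  fun l => if unlift i.1 l is Some j then v j else s.

Lemma slope_normal_pivot v : slope_normal v i.1 = s.
Proof. by rewrite /slope_normal unlift_none. Qed.

Lemma slope_normal_lift v j : slope_normal v (lift i.1 j) = v j.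
Proof. by rewrite /slope_normal liftK. Qed.

Lemma down_slope_normal v : Defs.down i.1 (slope_normal v) = v.
Proof. by apply: funext => j; rewrite /Defs.down slope_normal_lift. Qed.

Lemma down_to_orig (q : pt R n) : Defs.down i.1 (to_orig i q) = q.1.
Proof. by apply: funext => j; rewrite /Defs.down /to_orig liftK. Qed.

Lemma dot_slope_normal_to_orig v q :
  dot (slope_normal v) (to_orig i q) = dot v q.1 - q.2.
Proof.
rewrite (dot_down i.1) slope_normal_pivot down_slope_normal down_to_orig.
by rewrite /to_orig unlift_none mulrA mulrN sgnb_sq mulN1r addrC.
Qed.

Lemma enorm_slope_normal_gt0 v : 0 < enorm (slope_normal v).
Proof.
rewrite sqrtr_gt0 (dot_down i.1) slope_normal_pivot sgnb_sq.
by rewrite ltr_pwDl ?dot_self_ge0.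
Qed.

Lemma slope_normal_dist v v' d : 0 <= d -> (forall j, `|v j - v' j| <= d) ->
  forall l, `|slope_normal v l - slope_normal v' l| <= d.
Proof.
move=> d0 hd l; case: (unliftP i.1 l) => [j ->|->].
  by rewrite !slope_normal_lift.
by rewrite !slope_normal_pivot subrr normr0.
Qed.

Lemma Vdir_slope_normal v : unit_cube v ->
  Vdir i (fun l => (enorm (slope_normal v))^-1 * slope_normal v l).
Proof.
move=> cube_v; have N0 := enorm_slope_normal_gt0 v.
set N := enorm (slope_normal v) in N0 *.
have N_sqr : N ^+ 2 = dot (slope_normal v) (slope_normal v).
  exact/sqr_sqrtr/dot_self_ge0.
split; first by rewrite dotZl dotC dotZl -N_sqr; field; rewrite gt_eqF.
move=> [l b] ne_i; rewrite !dot_evec /= slope_normal_pivot -!mulrA sgnb_sq.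
rewrite ler_pM2l ?invr_gt0 //.
case: (unliftP i.1 l) => [j ->|l_pivot].
  rewrite slope_normal_lift; have := cube_v j; rewrite ler_norml.
  by case: b {ne_i}; rewrite /sgnb ?mulr1 ?mulrN1; lra.
have -> : b = ~~ i.2.
  move: ne_i; rewrite l_pivot; case: i => k [] /=; case: b => //.
by rewrite sgnbN l_pivot slope_normal_pivot mulrN sgnb_sq; lra.
Qed.

Lemma Vdir_slope_normalP u : Vdir i u ->
  exists2 mu, 0 < mu & exists2 v, unit_cube v & u = (fun l => mu * slope_normal v l).
Proof.
move=> [u_unit u_max]; set mu := u i.1 * s.
have coord_le l b : u (lift i.1 l) * sgnb R b <= mu.
  have := u_max (lift i.1 l, b); rewrite !dot_evec /=; apply.
  by move=> /(f_equal fst) /= /esym/eqP; rewrite (negbTE (neq_lift _ _)).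
have coord_abs l : `|u (lift i.1 l)| <= mu.
  rewrite ler_norml; have := coord_le l true; have := coord_le l false.
  by rewrite /sgnb mulr1 mulrN1; lra.
have u_pivot : u i.1 = mu * s by rewrite /mu -mulrA sgnb_sq mulr1.
have mu_ge0 : 0 <= mu.
  have := u_max (i.1, ~~ i.2); rewrite !dot_evec /= sgnbN mulrN -/mu.
  have /[swap]/[apply] : (i.1, ~~ i.2) <> i by move=> /(f_equal snd) /=; case: (i.2).
  lra.
have mu0 : 0 < mu.
  rewrite lt0r mu_ge0 andbT; apply/eqP => mu_eq0.
  move: u_unit; rewrite (dot_down i.1) u_pivot mu_eq0 !mul0r add0r.
  rewrite /dot big1 => [/esym/eqP|l _]; first by rewrite oner_eq0.
  have := coord_abs l; rewrite mu_eq0 normr_le0 /Defs.down.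
  by move=> /eqP ->; rewrite mul0r.
exists mu => //; exists (fun j => u (lift i.1 j) / mu).
  move=> j; rewrite normrM normfV (gtr0_norm mu0) ler_pdivrMr // mul1r.
  exact: coord_abs.
apply: funext => l; case: (unliftP i.1 l) => [j ->|->].
  by rewrite slope_normal_lift mulrC divfK // gt_eqF.
by rewrite slope_normal_pivot u_pivot.
Qed.
End SlopeNormals.

Lemma Kdown_thick_shift (R : realType) n (K : ('I_n.+1 -> R) -> Prop) k
    (alpha beta c : R) x j :
  0 <= alpha -> `|c| <= beta -> Kdown_thick K k alpha x ->
  Kdown_thick K k (alpha + beta) (shift_coord x j c).
Proof.
move=> alpha0 c_le thick delta delta0; have [z [Kz dist_z]] := thick delta delta0.
exists z; split => //; rewrite /sqdist; set w := Defs.down k z in dist_z *.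
pose D l := x l - w l.
have -> : (fun l => shift_coord x j c l - w l) = shift_coord D j c.
  by apply: funext => l; rewrite /shift_coord /D addrAC.
rewrite dot_shift_coord dotC dot_shift_coord /shift_coord eqxx.
have D_lt : dot D D < (alpha + delta) ^+ 2 by [].
have Dj_lt : `|D j| < alpha + delta.
  have := sqr_le_dot_self D j; rewrite -real_normK ?num_real // => Dj_sqr.
  have : 0 <= `|D j| by [].
  rewrite !expr2 in D_lt Dj_sqr; nra.
have cD_le : c * D j <= beta * (alpha + delta).
  apply: le_trans (ler_norm _) _; rewrite normrM.
  by apply: ler_pM => //; apply: ltW.
have c_sqr : c * c <= beta * beta.
  by apply: le_trans (ler_norm _) _; rewrite normrM; apply: ler_pM.
rewrite !expr2 in D_lt *; lra.
Qed.

Section UpperBoundary.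
Variables (R : realType) (n : nat) (K : ('I_n.+1 -> R) -> Prop) (M : R).
Variables (i : 'I_n.+1 * bool) (eps : R).
Hypothesis K_bounded : forall x, K x -> dot x x <= M.
Hypothesis K_nonempty : exists z, K z.

Local Notation hK v := (support K (slope_normal i v)).

Lemma Sset_slope_le v z : unit_cube v -> Sset K i z ->
  dot (slope_normal i v) z <= hK v.
Proof.
move=> cube_v Sz; have N0 := enorm_slope_normal_gt0 i v.
have := Sz _ (Vdir_slope_normal i cube_v) ((enorm (slope_normal i v))^-1 * hK v).
rewrite dotZl ler_pM2l ?invr_gt0 //; apply=> x Kx.
by rewrite dotZl ler_pM2l ?invr_gt0 // (support_ub K_bounded _ Kx).
Qed.

Lemma Sset_of_slopes q :
  (forall v, unit_cube v -> dot v q.1 - q.2 <= hK v) -> Sset K i (to_orig i q).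
Proof.
move=> above u /Vdir_slope_normalP [mu mu0 [v cube_v ->]] t ht.
rewrite dotZl dot_slope_normal_to_orig mulrC -ler_pdivlMr //.
apply: le_trans (above v cube_v) _; apply: support_le => // x Kx.
by rewrite ler_pdivlMr // mulrC -dotZl ht.
Qed.

Lemma exists_max_slope x : exists2 v, unit_cube v &
  forall v', unit_cube v' -> dot v' x - hK v' <= dot v x - hK v.
Proof.
pose row_fun (V : 'rV[R]_n) j := V ord0 j.
pose phi V := dot (row_fun V) x - hK (row_fun V).
pose cube : set 'rV[R]_n := [set V | forall j, `[-1, 1]%classic (V ord0 j)].
have cube_compact : compact cube.
  exact: (@rV_compact R n (fun=> `[-1, 1]%classic) (fun=> @segment_compact R (-1) 1)).
have cube0 : cube !=set0.
  by exists 0 => j /=; rewrite mxE in_itv /= lerN10 ler01.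
pose L := n%:R + dot x x + (n.+1%:R + M).
have phi_le V W : phi W <= phi V + `|V - W| * L.
  have dVW j : `|row_fun W j - row_fun V j| <= `|V - W|.
    by have := rV_entry_le_norm (V - W) j; rewrite !mxE distrC.
  have dWV j : `|row_fun V j - row_fun W j| <= `|V - W| by rewrite distrC.
  have := dot_sub_le x (normr_ge0 _) dVW.
  have := support_le_perturb K_bounded K_nonempty (normr_ge0 _)
    (slope_normal_dist i (normr_ge0 _) dWV).
  by rewrite /phi /L; lra.
have phi_cont : continuous phi.
  apply: (@lipschitz_continuous _ _ _ _ L) => V W; rewrite ler_norml.
  by have := phi_le V W; have := phi_le W V; rewrite distrC; lra.
have [c cube_c c_max] := EVT_max_rV cube0 cube_compact (continuous_subspaceT phi_cont).
exists (row_fun c) => [j|v cube_v].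
  by move: cube_c; rewrite inE => /(_ j); rewrite /= in_itv /= -ler_norml.
have row_funK : row_fun (\row_j v j) = v by apply: funext => j; rewrite /row_fun mxE.
rewrite -[in X in X <= _]row_funK; apply: (c_max (\row_j v j)).
by rewrite inE => j /=; rewrite mxE in_itv /= -ler_norml.
Qed.

Lemma aug_bd_Kset_graph x v : unit_cube v ->
  (forall v', unit_cube v' -> dot v' x - hK v' <= dot v x - hK v) ->
  Kdown_thick K i.1 (2 * eps) x ->
  aug_bd (Kset K i eps) ((x, dot v x - hK v), (v, hK v)).
Proof.
move=> cube_v v_max thick; split => //=.
  split => //; apply: Sset_of_slopes => v' cube_v' /=.
  by have := v_max v' cube_v'; lra.
move=> z [Sz _]; rewrite /above_hp /=.
have := Sset_slope_le cube_v Sz; rewrite dot_slope_normal_to_orig; lra.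
Qed.

Lemma useful_cap_coord_le p r j : 0 < eps -> useful K i eps p -> Cap K i eps p r ->
  `|r.1.1 j| <= 2.
Proof.
move=> eps0 [_ [q [[[Sq _] _ _] -> [[_ thick_q] _]]]] [[r_dual _ _] r_below].
move: r_below; rewrite /below_hp /hp_shift /=.
case: r r_dual => -[a b] _ /= r_dual r_below.
case: q Sq thick_q r_below => -[x0 y0] _ /= Sq thick_q r_below.
pose c := if 0 <= a j then eps else - eps.
have c_abs : `|c| = eps by rewrite /c; case: ifP; rewrite ?normrN gtr0_norm.
have ca : c * a j = eps * `|a j|.
  by rewrite /c; case: lerP => a0; [rewrite ger0_norm | rewrite ltr0_norm // mulrN mulNr].
pose x1 := shift_coord x0 j c.
have thick_x1 : Kdown_thick K i.1 (2 * eps) x1.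
  rewrite mulr_natl mulr2n.
  by apply: Kdown_thick_shift => //; [apply: ltW | rewrite c_abs].
have [v cube_v v_max] := exists_max_slope x1.
have dual_le := r_dual _ (aug_bd_Kset_graph cube_v v_max thick_x1).
rewrite /above_hp /= /x1 dot_shift_coord [dot v _]dotC dot_shift_coord ca in dual_le.
have q_le := Sset_slope_le cube_v Sq.
rewrite dot_slope_normal_to_orig /= dotC in q_le.
have cv_le : c * v j <= eps.
  rewrite -c_abs; apply: le_trans (ler_norm _) _.
  by rewrite normrM ler_piMr ?normr_ge0 ?cube_v.
have : eps * `|a j| <= eps * 2 by lra.
by rewrite ler_pM2l.
Qed.

End UpperBoundary.

Theorem lemma12 (R : realType) (n : nat) :
  exists C : R, forall (K : ('I_n.+1 -> R) -> Prop) (eps : R) (i : 'I_n.+1 * bool)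
    (p r : pt R n * pt R n),
    convex_body K -> 0 < eps -> useful K i eps p -> Cap K i eps p r ->
    enorm r.1.1 <= C.
Proof.
exists (Num.sqrt (n%:R * 2 ^+ 2)) => K eps i p r.
move=> [_ _ [M K_bounded] [c [rho [rho0 ball_K]]]] eps0 useful_p cap_r.
have K_nonempty : exists z, K z.
  by exists c; apply: ball_K; rewrite /sqdist /dot big1 // => j _; rewrite subrr mul0r.
apply: enorm_le_coord => j.
exact: (useful_cap_coord_le K_bounded K_nonempty j eps0 useful_p cap_r).
Qed.
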